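(* Let $S=\{(x_1,x_2)\in\mathbb{R}^2:x_1\ge0,\ x_1^2-x_2^3\ge0\}$ and $\tilde S^{o}=\{(x_0,x_1,x_2):x_1\ge0,\ x_0x_1^2-x_2^3\ge0,\ x_0>0\}$, $\tilde S^{c}=\{(x_0,x_1,x_2):x_1\ge0,\ x_0x_1^2-x_2^3\ge0,\ x_0\ge0\}$. Then $\overline{\tilde S^{o}}=\tilde S^{c}$ (so $S$ is closed at $\infty$), the linear form $2X_0+2X_1-3X_2$ is positive on $\mathrm{conv}(\overline{\tilde S^{o}})\setminus\{0\}$ (so $\mathrm{conv}(\overline{\tilde S^{o}})$ is closed and pointed), and consequently, with $\tilde G=\{X_1,X_0X_1^2-X_2^3,X_0,X_0^2+X_1^2+X_2^2-1,1-X_0^2-X_1^2-X_2^2\}$, $\overline{\mathrm{conv}(S)}=\bigcap_{k\ge1}\widetilde{\mathrm{TH}}_k(\tilde G)$.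
   Context: For a finite set $H$ of polynomials, $\mathcal{Q}_k(H)=\{\sum_{j}\sigma_jh_j:h_0=1,\ \sigma_j\text{ sums of squares},\ \deg(\sigma_jh_j)\le2k\}$. $\widetilde{\mathrm{TH}}_k(\tilde G)=\{(x_1,x_2):\tilde l(1,x_1,x_2)\ge0\ \forall\tilde l\in\mathcal{Q}_k(\tilde G)\text{ that is a linear form in }(X_0,X_1,X_2)\text{ or }0\}$. A closed convex cone $K$ is pointed if $K\cap(-K)=\{0\}$. *)

From Stdlib Require Import Reals List.
Import ListNotations.
Open Scope R_scope.

Definition fn3 := R -> R -> R -> R.

(** A monomial c * X0^a * X1^b * X2^e, stored as ((a,b,e), c). *)
Definition mono := ((nat * nat * nat) * R)%type.
Definition mono_eval (m : mono) (x0 x1 x2 : R) : R :=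
  let '((a, b, e), c) := m in c * x0 ^ a * x1 ^ b * x2 ^ e.
Definition mono_deg (m : mono) : nat :=
  let '((a, b, e), _) := m in (a + b + e)%nat.
Definition poly_eval (l : list mono) (x0 x1 x2 : R) : R :=
  fold_right (fun m s => mono_eval m x0 x1 x2 + s) 0 l.

(** f is a polynomial (function) of total degree <= d.  Over R a polynomial
    is determined by its function, so this is the usual degree bound. *)
Definition is_poly_deg_le (d : nat) (f : fn3) : Prop :=
  exists l : list mono, Forall (fun m => (mono_deg m <= d)%nat) l /\
    forall x0 x1 x2, f x0 x1 x2 = poly_eval l x0 x1 x2.
Definition is_poly (f : fn3) : Prop := exists d, is_poly_deg_le d f.

Definition is_sos (s : fn3) : Prop :=
  exists ps : list fn3, Forall is_poly ps /\
    forall x0 x1 x2, s x0 x1 x2 = fold_right (fun p acc => (p x0 x1 x2) ^ 2 + acc) 0 ps.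

Definition one3 : fn3 := fun _ _ _ => 1.

(** f ∈ Q_k(H), where the list H lists h_1,...,h_m and h_0 = 1 is prepended. *)
Definition in_Q (k : nat) (H : list fn3) (f : fn3) : Prop :=
  exists sigmas : list fn3,
    Forall2 (fun s h => is_sos s /\ is_poly_deg_le (2 * k) (fun x0 x1 x2 => s x0 x1 x2 * h x0 x1 x2))
      sigmas (one3 :: H) /\
    forall x0 x1 x2, f x0 x1 x2 =
      fold_right (fun sh acc => fst sh x0 x1 x2 * snd sh x0 x1 x2 + acc) 0
        (combine sigmas (one3 :: H)).

Definition THk (k : nat) (H : list fn3) (x : R * R) : Prop :=
  forall a0 a1 a2 : R,
    in_Q k H (fun X0 X1 X2 => a0 * X0 + a1 * X1 + a2 * X2) ->
    0 <= a0 * 1 + a1 * fst x + a2 * snd x.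

Definition closure2 (A : R * R -> Prop) (p : R * R) : Prop :=
  forall eps, 0 < eps -> exists q, A q /\
    Rabs (fst q - fst p) < eps /\ Rabs (snd q - snd p) < eps.
Definition closure3 (A : R * R * R -> Prop) (p : R * R * R) : Prop :=
  let '(p0, p1, p2) := p in
  forall eps, 0 < eps -> exists q0 q1 q2, A (q0, q1, q2) /\
    Rabs (q0 - p0) < eps /\ Rabs (q1 - p1) < eps /\ Rabs (q2 - p2) < eps.

Definition conv2 (A : R * R -> Prop) (p : R * R) : Prop :=
  exists l : list (R * (R * R)),
    Forall (fun wq => 0 <= fst wq /\ A (snd wq)) l /\
    fold_right (fun wq s => fst wq + s) 0 l = 1 /\
    fst p = fold_right (fun wq s => fst wq * fst (snd wq) + s) 0 l /\
    snd p = fold_right (fun wq s => fst wq * snd (snd wq) + s) 0 l.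

Definition crd0 (q : R * R * R) : R := let '(a, _, _) := q in a.
Definition crd1 (q : R * R * R) : R := let '(_, b, _) := q in b.
Definition crd2 (q : R * R * R) : R := let '(_, _, c) := q in c.

Definition conv3 (A : R * R * R -> Prop) (p : R * R * R) : Prop :=
  exists l : list (R * (R * R * R)),
    Forall (fun wq => 0 <= fst wq /\ A (snd wq)) l /\
    fold_right (fun wq s => fst wq + s) 0 l = 1 /\
    crd0 p = fold_right (fun wq s => fst wq * crd0 (snd wq) + s) 0 l /\
    crd1 p = fold_right (fun wq s => fst wq * crd1 (snd wq) + s) 0 l /\
    crd2 p = fold_right (fun wq s => fst wq * crd2 (snd wq) + s) 0 l.

Definition S_set (x : R * R) : Prop :=
  let '(x1, x2) := x in 0 <= x1 /\ 0 <= x1 ^ 2 - x2 ^ 3.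
Definition St_o (x : R * R * R) : Prop :=
  let '(x0, x1, x2) := x in 0 <= x1 /\ 0 <= x0 * x1 ^ 2 - x2 ^ 3 /\ 0 < x0.
Definition St_c (x : R * R * R) : Prop :=
  let '(x0, x1, x2) := x in 0 <= x1 /\ 0 <= x0 * x1 ^ 2 - x2 ^ 3 /\ 0 <= x0.

Definition Gt : list fn3 :=
  [ (fun X0 X1 X2 => X1);
    (fun X0 X1 X2 => X0 * X1 ^ 2 - X2 ^ 3);
    (fun X0 X1 X2 => X0);
    (fun X0 X1 X2 => X0 ^ 2 + X1 ^ 2 + X2 ^ 2 - 1);
    (fun X0 X1 X2 => 1 - X0 ^ 2 - X1 ^ 2 - X2 ^ 2) ].

(** By AM-GM, for x0, x1 >= 0 the cubic
    constraint x0 x1^2 >= x2^3 is equivalent to the family of tangent-plane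
    inequalities x0 + 2 s^3 x1 - 3 s^2 x2 >= 0 (s > 0).  So S~^c is an
    intersection of closed half-spaces: it is closed and convex, equal to the
    closure of S~^o and to conv(S~^c); it is pointed, and 2 X0 + 2 X1 - 3 X2
    (the tangent plane s = 1 plus X0) vanishes on it only at the origin.

    Every linear form of Q_k(Gt) is nonnegative on the cone
    part of the unit sphere, hence on S and on its closed convex hull.
    Conversely a point outside S is cut off by a linear form of the quadratic
    module generated by Gt (modulo the sphere): either X1, or a slightly
    tilted tangent form T + eps E.  For the latter, T times a positive definite
    quadratic W is certified by AM-GM identities, and W is inverted on the
    sphere by a geometric series whose error is absorbed by eps E. *)

From Stdlib Require Import Reals List Lra Lia Psatz.
Import ListNotations.
Open Scope R_scope.

Definition mono_mul (m1 m2 : mono) : mono :=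
  let '((a, b, e), c) := m1 in let '((a', b', e'), c') := m2 in
  ((a + a', b + b', e + e')%nat, c * c').

Lemma mono_mul_eval m1 m2 x0 x1 x2 :
  mono_eval (mono_mul m1 m2) x0 x1 x2 = mono_eval m1 x0 x1 x2 * mono_eval m2 x0 x1 x2.
Proof.
  destruct m1 as [[[a b] e] c], m2 as [[[a' b'] e'] c']; simpl.
  rewrite !pow_add; ring.
Qed.

Lemma mono_mul_deg m1 m2 : mono_deg (mono_mul m1 m2) = (mono_deg m1 + mono_deg m2)%nat.
Proof. destruct m1 as [[[a b] e] c], m2 as [[[a' b'] e'] c']; simpl; lia. Qed.

Lemma poly_eval_app l1 l2 x0 x1 x2 :
  poly_eval (l1 ++ l2) x0 x1 x2 = poly_eval l1 x0 x1 x2 + poly_eval l2 x0 x1 x2.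
Proof. induction l1 as [|m l1 IH]; simpl; [ring | rewrite IH; ring]. Qed.

Definition pmul (l1 l2 : list mono) : list mono :=
  flat_map (fun m => map (mono_mul m) l2) l1.

Lemma pmul_eval l1 l2 x0 x1 x2 :
  poly_eval (pmul l1 l2) x0 x1 x2 = poly_eval l1 x0 x1 x2 * poly_eval l2 x0 x1 x2.
Proof.
  assert (Hmap : forall m, poly_eval (map (mono_mul m) l2) x0 x1 x2
                           = mono_eval m x0 x1 x2 * poly_eval l2 x0 x1 x2).
  { intros m; induction l2 as [|m' l2 IH]; simpl; [ring|].
    rewrite IH, mono_mul_eval; ring. }
  induction l1 as [|m l1 IH]; simpl; [ring|].
  unfold pmul in *; simpl. rewrite poly_eval_app, Hmap, IH; ring.
Qed.

Lemma pmul_deg d1 d2 l1 l2 :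
  Forall (fun m => (mono_deg m <= d1)%nat) l1 ->
  Forall (fun m => (mono_deg m <= d2)%nat) l2 ->
  Forall (fun m => (mono_deg m <= d1 + d2)%nat) (pmul l1 l2).
Proof.
  intros H1 H2. apply Forall_flat_map. eapply Forall_impl; [|exact H1].
  intros m Hm. apply Forall_map. eapply Forall_impl; [|exact H2].
  intros m' Hm'; cbv beta in *. rewrite mono_mul_deg; lia.
Qed.

Lemma deg_le_weaken d d' f : (d <= d')%nat -> is_poly_deg_le d f -> is_poly_deg_le d' f.
Proof.
  intros Hd [l [Hl E]]. exists l; split; auto.
  eapply Forall_impl; [|exact Hl]. intros m Hm; cbv beta in *; lia.
Qed.

Lemma deg_le_const c : is_poly_deg_le 0 (fun _ _ _ => c).
Proof. exists [((0, 0, 0)%nat, c)]. split; [repeat constructor | intros; simpl; ring]. Qed.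

Lemma deg_le_X0 : is_poly_deg_le 1 (fun x0 _ _ => x0).
Proof. exists [((1, 0, 0)%nat, 1)]. split; [repeat constructor | intros; simpl; ring]. Qed.

Lemma deg_le_X1 : is_poly_deg_le 1 (fun _ x1 _ => x1).
Proof. exists [((0, 1, 0)%nat, 1)]. split; [repeat constructor | intros; simpl; ring]. Qed.

Lemma deg_le_X2 : is_poly_deg_le 1 (fun _ _ x2 => x2).
Proof. exists [((0, 0, 1)%nat, 1)]. split; [repeat constructor | intros; simpl; ring]. Qed.

Lemma deg_le_add d1 d2 f g : is_poly_deg_le d1 f -> is_poly_deg_le d2 g ->
  is_poly_deg_le (Nat.max d1 d2) (fun x0 x1 x2 => f x0 x1 x2 + g x0 x1 x2).
Proof.
  intros [l1 [H1 E1]] [l2 [H2 E2]]. exists (l1 ++ l2). split.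
  - apply Forall_app; split; (eapply Forall_impl; [|eassumption]);
      intros m Hm; cbv beta in *; lia.
  - intros; rewrite poly_eval_app, E1, E2; auto.
Qed.

Lemma deg_le_mul d1 d2 f g : is_poly_deg_le d1 f -> is_poly_deg_le d2 g ->
  is_poly_deg_le (d1 + d2) (fun x0 x1 x2 => f x0 x1 x2 * g x0 x1 x2).
Proof.
  intros [l1 [H1 E1]] [l2 [H2 E2]]. exists (pmul l1 l2).
  split; [apply pmul_deg; auto | intros; rewrite pmul_eval, E1, E2; auto].
Qed.

Lemma poly_ext f g : is_poly f -> (forall x0 x1 x2, f x0 x1 x2 = g x0 x1 x2) -> is_poly g.
Proof. intros [d [l [Hl E]]] Hfg. exists d, l. split; auto. intros; rewrite <- Hfg; auto. Qed.

Lemma poly_const c : is_poly (fun _ _ _ => c).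
Proof. exists 0%nat; apply deg_le_const. Qed.
Lemma poly_X0 : is_poly (fun x0 _ _ => x0). Proof. exists 1%nat; apply deg_le_X0. Qed.
Lemma poly_X1 : is_poly (fun _ x1 _ => x1). Proof. exists 1%nat; apply deg_le_X1. Qed.
Lemma poly_X2 : is_poly (fun _ _ x2 => x2). Proof. exists 1%nat; apply deg_le_X2. Qed.

Lemma poly_add f g : is_poly f -> is_poly g -> is_poly (fun x0 x1 x2 => f x0 x1 x2 + g x0 x1 x2).
Proof. intros [d1 H1] [d2 H2]; eexists; apply deg_le_add; eauto. Qed.

Lemma poly_mul f g : is_poly f -> is_poly g -> is_poly (fun x0 x1 x2 => f x0 x1 x2 * g x0 x1 x2).
Proof. intros [d1 H1] [d2 H2]; eexists; apply deg_le_mul; eauto. Qed.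

Lemma poly_scal c f : is_poly f -> is_poly (fun x0 x1 x2 => c * f x0 x1 x2).
Proof. intros Hf. apply (poly_mul (fun _ _ _ => c) f); auto using poly_const. Qed.

Lemma poly_opp f : is_poly f -> is_poly (fun x0 x1 x2 => - f x0 x1 x2).
Proof.
  intros Hf. eapply poly_ext; [apply (poly_scal (-1) f Hf) | intros; simpl; ring].
Qed.

Lemma poly_sub f g : is_poly f -> is_poly g -> is_poly (fun x0 x1 x2 => f x0 x1 x2 - g x0 x1 x2).
Proof. intros Hf Hg. apply (poly_add f (fun a b c => - g a b c)); auto using poly_opp. Qed.

Lemma poly_div f c : is_poly f -> is_poly (fun x0 x1 x2 => f x0 x1 x2 / c).
Proof.
  intros Hf. eapply poly_ext; [apply (poly_scal (/ c) f Hf) | intros; simpl; unfold Rdiv; ring].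
Qed.

Lemma poly_pow f n : is_poly f -> is_poly (fun x0 x1 x2 => f x0 x1 x2 ^ n).
Proof.
  intros Hf. induction n as [|n IH]; simpl; [apply poly_const|].
  apply (poly_mul f (fun a b c => f a b c ^ n)); auto.
Qed.

Ltac solve_poly := repeat first
  [ assumption | apply poly_X0 | apply poly_X1 | apply poly_X2 | apply poly_const
  | apply poly_add | apply poly_sub | apply poly_mul | apply poly_opp | apply poly_div
  | apply poly_pow ].

Definition ssq (ps : list fn3) (x0 x1 x2 : R) : R :=
  fold_right (fun p acc => p x0 x1 x2 ^ 2 + acc) 0 ps.

Lemma ssq_app ps qs x0 x1 x2 : ssq (ps ++ qs) x0 x1 x2 = ssq ps x0 x1 x2 + ssq qs x0 x1 x2.
Proof. induction ps as [|p ps IH]; simpl; [ring|]. unfold ssq in *; rewrite IH; ring. Qed.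

Definition ssq_prod (ps qs : list fn3) : list fn3 :=
  flat_map (fun p => map (fun q x0 x1 x2 => p x0 x1 x2 * q x0 x1 x2) qs) ps.

Lemma ssq_prod_eval ps qs x0 x1 x2 :
  ssq (ssq_prod ps qs) x0 x1 x2 = ssq ps x0 x1 x2 * ssq qs x0 x1 x2.
Proof.
  assert (Hmap : forall p : fn3,
    ssq (map (fun q x0 x1 x2 => p x0 x1 x2 * q x0 x1 x2) qs) x0 x1 x2
    = p x0 x1 x2 ^ 2 * ssq qs x0 x1 x2).
  { intros p; induction qs as [|q qs IH]; [unfold ssq; simpl; ring|].
    cbn [map]. unfold ssq in *. cbn [fold_right]. rewrite IH; ring. }
  induction ps as [|p ps IH]; [unfold ssq; simpl; ring|].
  unfold ssq_prod in *; simpl. rewrite ssq_app, Hmap, IH. unfold ssq; simpl; ring.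
Qed.

Lemma sos_ext s t : is_sos s -> (forall x0 x1 x2, s x0 x1 x2 = t x0 x1 x2) -> is_sos t.
Proof. intros [ps [H E]] E'. exists ps; split; auto. intros; rewrite <- E'; auto. Qed.

Lemma sos_nonneg s x0 x1 x2 : is_sos s -> 0 <= s x0 x1 x2.
Proof.
  intros [ps [_ E]]. rewrite E. clear E. induction ps as [|p ps IH]; cbn [fold_right]; [lra|].
  pose proof (pow2_ge_0 (p x0 x1 x2)); lra.
Qed.

Lemma ssq_poly ps : Forall is_poly ps -> is_poly (ssq ps).
Proof.
  induction 1 as [|p ps Hp _ IH]; [apply poly_const|].
  apply (poly_add (fun a b c => p a b c ^ 2) (ssq ps)); [apply poly_pow, Hp | exact IH].
Qed.

Lemma sos_poly s : is_sos s -> is_poly s.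
Proof.
  intros [ps [H E]]. apply poly_ext with (ssq ps); [apply ssq_poly, H|].
  intros; rewrite E; reflexivity.
Qed.

Lemma sos_sq p : is_poly p -> is_sos (fun x0 x1 x2 => p x0 x1 x2 ^ 2).
Proof. intros H. exists [p]. split; [repeat constructor; auto | intros; simpl; ring]. Qed.

Lemma sos_zero : is_sos (fun _ _ _ => 0).
Proof. exists []. split; auto. Qed.

Lemma sos_add s t : is_sos s -> is_sos t -> is_sos (fun x0 x1 x2 => s x0 x1 x2 + t x0 x1 x2).
Proof.
  intros [ps [H E]] [qs [H' E']]. exists (ps ++ qs).
  split; [apply Forall_app; auto|]. intros.
  fold (ssq (ps ++ qs) x0 x1 x2). rewrite ssq_app, E, E'; reflexivity.
Qed.

Lemma sos_mul s t : is_sos s -> is_sos t -> is_sos (fun x0 x1 x2 => s x0 x1 x2 * t x0 x1 x2).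
Proof.
  intros [ps [H E]] [qs [H' E']]. exists (ssq_prod ps qs). split.
  - apply Forall_flat_map. eapply Forall_impl; [|exact H]. intros p Hp.
    apply Forall_map. eapply Forall_impl; [|exact H']. intros q Hq. solve_poly.
  - intros. fold (ssq (ssq_prod ps qs) x0 x1 x2). rewrite ssq_prod_eval, E, E'; reflexivity.
Qed.

Lemma sos_const c : 0 <= c -> is_sos (fun _ _ _ => c).
Proof.
  intros Hc. apply sos_ext with (fun x0 x1 x2 => (fun _ _ _ => sqrt c) x0 x1 x2 ^ 2).
  - apply sos_sq, poly_const.
  - intros; simpl. rewrite Rmult_1_r, sqrt_sqrt; auto.
Qed.

Lemma sos_scal c s : 0 <= c -> is_sos s -> is_sos (fun x0 x1 x2 => c * s x0 x1 x2).
Proof. intros Hc Hs. apply (sos_mul (fun _ _ _ => c) s); auto using sos_const. Qed.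

Lemma sos_csq c p : 0 <= c -> is_poly p -> is_sos (fun x0 x1 x2 => c * p x0 x1 x2 ^ 2).
Proof. intros Hc Hp. apply (sos_scal c (fun x0 x1 x2 => p x0 x1 x2 ^ 2)); auto using sos_sq. Qed.

Lemma sos_pow s n : is_sos s -> is_sos (fun x0 x1 x2 => s x0 x1 x2 ^ n).
Proof.
  intros Hs. induction n as [|n IH]; simpl; [apply sos_const; lra|].
  apply (sos_mul s (fun a b c => s a b c ^ n)); auto.
Qed.

(** * Certificates modulo the unit sphere *)

(** The equation of the unit sphere; Gt contains it with both signs, so any
    polynomial multiple of it may be added to an element of Q_k(Gt). *)
Definition sphere : fn3 := fun x0 x1 x2 => x0 ^ 2 + x1 ^ 2 + x2 ^ 2 - 1.

Definition sos_mod (f : fn3) : Prop :=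
  exists s q, is_sos s /\ is_poly q /\
    forall x0 x1 x2, f x0 x1 x2 = s x0 x1 x2 + q x0 x1 x2 * sphere x0 x1 x2.

(** [f] lies in the quadratic module generated by X1, X0 X1^2 - X2^3 and X0,
    modulo the ideal of the sphere: the union over k of the Q_k(Gt). *)
Definition qmod (f : fn3) : Prop :=
  exists s0 s1 s2 s3 q, is_sos s0 /\ is_sos s1 /\ is_sos s2 /\ is_sos s3 /\ is_poly q /\
    forall x0 x1 x2, f x0 x1 x2 =
      s0 x0 x1 x2 + s1 x0 x1 x2 * x1 + s2 x0 x1 x2 * (x0 * x1 ^ 2 - x2 ^ 3)
      + s3 x0 x1 x2 * x0 + q x0 x1 x2 * sphere x0 x1 x2.

Lemma poly_sphere : is_poly sphere.
Proof. unfold sphere; solve_poly. Qed.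

Lemma sos_mod_poly f : sos_mod f -> is_poly f.
Proof.
  intros [s [q [Hs [Hq E]]]]. pose proof (sos_poly _ Hs). pose proof poly_sphere.
  apply poly_ext with (fun x0 x1 x2 => s x0 x1 x2 + q x0 x1 x2 * sphere x0 x1 x2);
    [solve_poly | intros; rewrite E; auto].
Qed.

Lemma sos_mod_of_sos f : is_sos f -> sos_mod f.
Proof.
  intros H. exists f, (fun _ _ _ => 0). repeat split; auto using poly_const. intros; ring.
Qed.

Lemma sos_mod_const c : 0 <= c -> sos_mod (fun _ _ _ => c).
Proof. intros; apply sos_mod_of_sos, sos_const; auto. Qed.

Lemma sos_mod_ext f g : sos_mod f -> (forall x0 x1 x2, f x0 x1 x2 = g x0 x1 x2) -> sos_mod g.
Proof.
  intros [s [q [Hs [Hq E]]]] E'. exists s, q. repeat split; auto.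
  intros; rewrite <- E'; auto.
Qed.

Lemma sos_mod_add f g : sos_mod f -> sos_mod g -> sos_mod (fun x0 x1 x2 => f x0 x1 x2 + g x0 x1 x2).
Proof.
  intros [s [q [Hs [Hq E]]]] [s' [q' [Hs' [Hq' E']]]].
  exists (fun x0 x1 x2 => s x0 x1 x2 + s' x0 x1 x2), (fun x0 x1 x2 => q x0 x1 x2 + q' x0 x1 x2).
  repeat split; auto using sos_add; [solve_poly|]. intros; rewrite E, E'; ring.
Qed.

Lemma sos_mod_mul f g : sos_mod f -> sos_mod g -> sos_mod (fun x0 x1 x2 => f x0 x1 x2 * g x0 x1 x2).
Proof.
  intros Hf Hg. pose proof (sos_mod_poly _ Hf) as Pf.
  destruct Hf as [s [q [Hs [Hq E]]]], Hg as [s' [q' [Hs' [Hq' E']]]].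
  pose proof (sos_poly _ Hs').
  exists (fun x0 x1 x2 => s x0 x1 x2 * s' x0 x1 x2),
         (fun x0 x1 x2 => q x0 x1 x2 * s' x0 x1 x2 + f x0 x1 x2 * q' x0 x1 x2).
  repeat split; auto using sos_mul; [solve_poly|]. intros; rewrite E', E; ring.
Qed.

Lemma qmod_poly f : qmod f -> is_poly f.
Proof.
  intros [s0 [s1 [s2 [s3 [q [H0 [H1 [H2 [H3 [Hq E]]]]]]]]]].
  apply sos_poly in H0, H1, H2, H3. pose proof poly_sphere.
  eapply poly_ext; [|intros; symmetry; apply E]. solve_poly.
Qed.

Lemma qmod_ext f g : qmod f -> (forall x0 x1 x2, f x0 x1 x2 = g x0 x1 x2) -> qmod g.
Proof.
  intros [s0 [s1 [s2 [s3 [q [H0 [H1 [H2 [H3 [Hq E]]]]]]]]]] E'.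
  exists s0, s1, s2, s3, q. repeat split; auto. intros; rewrite <- E'; auto.
Qed.

Lemma qmod_add f g : qmod f -> qmod g -> qmod (fun x0 x1 x2 => f x0 x1 x2 + g x0 x1 x2).
Proof.
  intros [s0 [s1 [s2 [s3 [q [H0 [H1 [H2 [H3 [Hq E]]]]]]]]]]
         [t0 [t1 [t2 [t3 [r [G0 [G1 [G2 [G3 [Hr F]]]]]]]]]].
  exists (fun x0 x1 x2 => s0 x0 x1 x2 + t0 x0 x1 x2), (fun x0 x1 x2 => s1 x0 x1 x2 + t1 x0 x1 x2),
         (fun x0 x1 x2 => s2 x0 x1 x2 + t2 x0 x1 x2), (fun x0 x1 x2 => s3 x0 x1 x2 + t3 x0 x1 x2),
         (fun x0 x1 x2 => q x0 x1 x2 + r x0 x1 x2).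
  repeat split; auto using sos_add; [solve_poly|]. intros; rewrite E, F; ring.
Qed.

Lemma qmod_mul f p : qmod f -> sos_mod p -> qmod (fun x0 x1 x2 => f x0 x1 x2 * p x0 x1 x2).
Proof.
  intros Hf Hp. pose proof (qmod_poly _ Hf) as Pf.
  destruct Hf as [s0 [s1 [s2 [s3 [q [H0 [H1 [H2 [H3 [Hq E]]]]]]]]]].
  destruct Hp as [s [r [Hs [Hr F]]]]. pose proof (sos_poly _ Hs).
  exists (fun x0 x1 x2 => s0 x0 x1 x2 * s x0 x1 x2), (fun x0 x1 x2 => s1 x0 x1 x2 * s x0 x1 x2),
         (fun x0 x1 x2 => s2 x0 x1 x2 * s x0 x1 x2), (fun x0 x1 x2 => s3 x0 x1 x2 * s x0 x1 x2),
         (fun x0 x1 x2 => q x0 x1 x2 * s x0 x1 x2 + f x0 x1 x2 * r x0 x1 x2).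
  repeat split; auto using sos_mul; [solve_poly|].
  intros. rewrite F, E. unfold sphere. ring.
Qed.

Lemma qmod_scal c f : 0 <= c -> qmod f -> qmod (fun x0 x1 x2 => c * f x0 x1 x2).
Proof.
  intros Hc Hf. eapply qmod_ext; [apply (qmod_mul f (fun _ _ _ => c)); auto using sos_mod_const|].
  intros; simpl; ring.
Qed.

Lemma qmod_mod_sphere f g q : qmod f -> is_poly q ->
  (forall x0 x1 x2, g x0 x1 x2 = f x0 x1 x2 + q x0 x1 x2 * sphere x0 x1 x2) -> qmod g.
Proof.
  intros [s0 [s1 [s2 [s3 [r [H0 [H1 [H2 [H3 [Hr E]]]]]]]]]] Hq F.
  exists s0, s1, s2, s3, (fun x0 x1 x2 => r x0 x1 x2 + q x0 x1 x2).
  repeat split; auto; [solve_poly|]. intros; rewrite F, E; ring.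
Qed.

(** Every element of the quadratic module lies in Q_k(Gt) for some large k:
    a multiple q of the sphere equation is split as
    ((q+1)/2)^2 * sphere + ((q-1)/2)^2 * (-sphere). *)
Lemma qmod_in_Q f k0 : qmod f -> exists k, (k0 <= k)%nat /\ in_Q k Gt f.
Proof.
  intros [s0 [s1 [s2 [s3 [q [H0 [H1 [H2 [H3 [Hq E]]]]]]]]]].
  set (s4 := fun x0 x1 x2 => ((q x0 x1 x2 + 1) / 2) ^ 2).
  set (s5 := fun x0 x1 x2 => ((q x0 x1 x2 - 1) / 2) ^ 2).
  assert (H4 : is_sos s4) by (apply (sos_sq (fun x0 x1 x2 => (q x0 x1 x2 + 1) / 2)); solve_poly).
  assert (H5 : is_sos s5) by (apply (sos_sq (fun x0 x1 x2 => (q x0 x1 x2 - 1) / 2)); solve_poly).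
  assert (Hdeg : forall s h, is_sos s -> is_poly h ->
            exists d, is_poly_deg_le d (fun x0 x1 x2 => s x0 x1 x2 * h x0 x1 x2)).
  { intros s h Hs Hh. apply poly_mul; auto using sos_poly. }
  destruct (Hdeg s0 one3) as [d0 D0]; [auto | apply poly_const|].
  destruct (Hdeg s1 (fun X0 X1 X2 => X1)) as [d1 D1]; [auto | solve_poly|].
  destruct (Hdeg s2 (fun X0 X1 X2 => X0 * X1 ^ 2 - X2 ^ 3)) as [d2 D2]; [auto | solve_poly|].
  destruct (Hdeg s3 (fun X0 X1 X2 => X0)) as [d3 D3]; [auto | solve_poly|].
  destruct (Hdeg s4 (fun X0 X1 X2 => X0 ^ 2 + X1 ^ 2 + X2 ^ 2 - 1)) as [d4 D4]; [auto | solve_poly|].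
  destruct (Hdeg s5 (fun X0 X1 X2 => 1 - X0 ^ 2 - X1 ^ 2 - X2 ^ 2)) as [d5 D5]; [auto | solve_poly|].
  exists (k0 + d0 + d1 + d2 + d3 + d4 + d5)%nat. split; [lia|].
  exists [s0; s1; s2; s3; s4; s5]. split.
  - unfold Gt. repeat constructor; auto; eapply deg_le_weaken; try eassumption; lia.
  - intros. simpl. rewrite E. unfold s4, s5, one3, sphere. field.
Qed.

Lemma in_Q_nonneg k f x0 x1 x2 : in_Q k Gt f ->
  0 <= x1 -> 0 <= x0 * x1 ^ 2 - x2 ^ 3 -> 0 <= x0 -> x0 ^ 2 + x1 ^ 2 + x2 ^ 2 = 1 ->
  0 <= f x0 x1 x2.
Proof.
  intros [sig [HF E]] A B C D. rewrite E.
  assert (Hgen : Forall (fun h : fn3 => 0 <= h x0 x1 x2) (one3 :: Gt)).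
  { unfold Gt, one3. repeat (constructor; [cbv beta; lra|]). constructor. }
  revert Hgen. clear E. induction HF as [|s h sig hs [Hs _] _ IH]; intros Hgen; simpl; [lra|].
  inversion Hgen; subst. pose proof (sos_nonneg s x0 x1 x2 Hs).
  apply Rplus_le_le_0_compat; [apply Rmult_le_pos|]; auto.
Qed.

(** * Linear forms in the quadratic module *)

(** Forms with a comfortable margin have a direct certificate, whose sphere
    multiplier is minus the form itself. *)
Lemma linear_qmod a b : 1 <= a -> 1/2 <= b -> qmod (fun x0 x1 x2 => a * x0 + b * x1 - x2).
Proof.
  intros Ha Hb.
  assert (Ha' : 0 <= a - 1 / (4 * a)).
  { replace (a - 1 / (4 * a)) with ((4 * a * a - 1) / (4 * a)) by (field; lra).
    apply Rle_mult_inv_pos; nra. }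
  assert (Hb' : 0 <= b - 1 / (4 * b)).
  { replace (b - 1 / (4 * b)) with ((4 * b * b - 1) / (4 * b)) by (field; lra).
    apply Rle_mult_inv_pos; nra. }
  exists (fun _ _ _ => 0),
    (fun x0 x1 x2 => b * x0 ^ 2 + b * (x1 - x2 / (2 * b)) ^ 2 + (b - 1 / (4 * b)) * x2 ^ 2),
    (fun _ _ _ => 1),
    (fun x0 x1 x2 => a * (x0 - x2 / (2 * a)) ^ 2 + (a - 1 / (4 * a)) * x2 ^ 2 + (a - 1) * x1 ^ 2),
    (fun x0 x1 x2 => - (a * x0 + b * x1 - x2)).
  repeat split.
  - apply sos_zero.
  - repeat apply sos_add; apply sos_csq; try lra; solve_poly.
  - apply sos_const; lra.
  - repeat apply sos_add; apply sos_csq; try lra; solve_poly.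
  - solve_poly.
  - intros. unfold sphere. field. lra.
Qed.

(** The cofactor of u - 3 X2 in u^3 - 27 X2^3, for u = c X0 + d X1. *)
Definition cofactor (c d : R) : fn3 := fun x0 x1 x2 =>
  (c * x0 + d * x1) ^ 2 + 3 * (c * x0 + d * x1) * x2 + 9 * x2 ^ 2.

Lemma cofactor_sos c d : is_sos (cofactor c d).
Proof.
  eapply sos_ext.
  - apply sos_add.
    + apply (sos_sq (fun x0 x1 x2 => c * x0 + d * x1 + 3 / 2 * x2)); solve_poly.
    + apply (sos_csq (27 / 4) (fun x0 x1 x2 => x2)); [lra | solve_poly].
  - intros; unfold cofactor; simpl; field.
Qed.

(** A form a X0 + b X1 - 3 X2 dominating a tangent form al X0 + 2 be X1 - 3 X2
    (al be^2 = 1) of the cone becomes a member of the quadratic module after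
    multiplication by the tangent's cofactor: this is the AM-GM inequality
    (al X0 + 2 be X1)^3 >= 27 X0 X1^2 written as a certificate. *)
Lemma tangent_times_cofactor al be a b : 0 <= al -> 0 <= be -> al * be ^ 2 = 1 ->
  al <= a -> 2 * be <= b ->
  qmod (fun x0 x1 x2 => (a * x0 + b * x1 - 3 * x2) * cofactor al (2 * be) x0 x1 x2).
Proof.
  intros H1 H2 H3 H4 H5. pose proof (cofactor_sos al (2 * be)) as HQ.
  exists (fun _ _ _ => 0),
    (fun x0 x1 x2 => 8 * be * (al * x0 - be * x1) ^ 2 + (b - 2 * be) * cofactor al (2 * be) x0 x1 x2),
    (fun _ _ _ => 27),
    (fun x0 x1 x2 => al * (al * x0 - be * x1) ^ 2 + (a - al) * cofactor al (2 * be) x0 x1 x2),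
    (fun _ _ _ => 0).
  repeat split.
  - apply sos_zero.
  - apply sos_add; [apply sos_csq; [lra | solve_poly] | apply sos_scal; auto; lra].
  - apply sos_const; lra.
  - apply sos_add; [apply sos_csq; [lra | solve_poly] | apply sos_scal; auto; lra].
  - solve_poly.
  - intros. unfold cofactor, sphere.
    assert (Hdefect : forall lhs rhs, lhs - rhs = 27 * x0 * x1 ^ 2 * (al * be ^ 2 - 1) ->
                                      lhs = rhs) by (intros; rewrite H3 in *; lra).
    apply Hdefect. ring.
Qed.

Lemma cofactor_pair_upper c1 d1 c2 d2 :
  is_sos (fun x0 x1 x2 => (21 + 5/2 * (c1^2 + d1^2 + c2^2 + d2^2)) * (x0^2 + x1^2 + x2^2)
                          - cofactor c1 d1 x0 x1 x2 - cofactor c2 d2 x0 x1 x2).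
Proof.
  eapply sos_ext.
  - apply sos_add. { apply (sos_csq (3/2) (fun x0 x1 x2 => c1*x0 + d1*x1 - x2)); [lra|solve_poly]. }
    apply sos_add. { apply (sos_csq (3/2) (fun x0 x1 x2 => c2*x0 + d2*x1 - x2)); [lra|solve_poly]. }
    apply sos_add. { apply (sos_csq (5/2) (fun x0 x1 x2 => d1*x0 - c1*x1)); [lra|solve_poly]. }
    apply sos_add. { apply (sos_csq (5/2) (fun x0 x1 x2 => d2*x0 - c2*x1)); [lra|solve_poly]. }
    apply sos_add. { apply (sos_csq 21 (fun x0 x1 x2 => x0)); [lra|solve_poly]. }
    apply sos_add. { apply (sos_csq 21 (fun x0 x1 x2 => x1)); [lra|solve_poly]. }
    apply (sos_csq (5/2 * (c1^2 + d1^2 + c2^2 + d2^2)) (fun x0 x1 x2 => x2)); [|solve_poly].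
    apply Rmult_le_pos; [lra|]. repeat apply Rplus_le_le_0_compat; apply pow2_ge_0.
  - intros; unfold cofactor; simpl; field.
Qed.

Lemma cofactor_pair_lower c1 d1 c2 d2 : c1 * d2 - c2 * d1 <> 0 -> exists m, 0 < m <= 9 /\
  is_sos (fun x0 x1 x2 => cofactor c1 d1 x0 x1 x2 + cofactor c2 d2 x0 x1 x2
                          - m * (x0^2 + x1^2 + x2^2)).
Proof.
  intros HD. set (S := c1^2 + d1^2 + c2^2 + d2^2). set (D := c1 * d2 - c2 * d1).
  assert (HD2 : 0 < D ^ 2) by (rewrite <- Rsqr_pow2; apply Rsqr_pos_lt, HD).
  assert (HS : 0 < S).
  { assert (HL : D ^ 2 + (c1 * d1 + c2 * d2) ^ 2 = (c1^2 + c2^2) * (d1^2 + d2^2))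
      by (unfold D; ring).
    pose proof (pow2_ge_0 (c1 * d1 + c2 * d2)).
    pose proof (pow2_ge_0 c1); pose proof (pow2_ge_0 c2).
    pose proof (pow2_ge_0 d1); pose proof (pow2_ge_0 d2).
    unfold S; nra. }
  set (m := Rmin 9 (D ^ 2 / (2 * S))).
  assert (Hq : 0 < D ^ 2 / (2 * S)) by (apply Rdiv_lt_0_compat; lra).
  assert (m1 : m <= 9) by apply Rmin_l.
  assert (m2 : m <= D ^ 2 / (2 * S)) by apply Rmin_r.
  assert (m3 : 0 < m) by (apply Rmin_glb_lt; lra).
  assert (HiS : 0 <= 1 / (2 * S)) by (apply Rlt_le, Rdiv_lt_0_compat; lra).
  exists m. split; [lra|].
  eapply sos_ext.
  - apply sos_add. { apply (sos_csq (D^2 / (2*S) - m) (fun x0 x1 x2 => x0)); [lra|solve_poly]. }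
    apply sos_add. { apply (sos_csq (D^2 / (2*S) - m) (fun x0 x1 x2 => x1)); [lra|solve_poly]. }
    apply sos_add. { apply (sos_csq (9 - m) (fun x0 x1 x2 => x2)); [lra|solve_poly]. }
    apply sos_add. { apply (sos_csq (1/2) (fun x0 x1 x2 => c1*x0 + d1*x1 + 3*x2)); [lra|solve_poly]. }
    apply sos_add. { apply (sos_csq (1/2) (fun x0 x1 x2 => c2*x0 + d2*x1 + 3*x2)); [lra|solve_poly]. }
    apply sos_add.
    { apply (sos_csq (1/(2*S)) (fun x0 x1 x2 => d1*(c1*x0 + d1*x1) + d2*(c2*x0 + d2*x1)));
        [exact HiS|solve_poly]. }
    apply (sos_csq (1/(2*S)) (fun x0 x1 x2 => c1*(c1*x0 + d1*x1) + c2*(c2*x0 + d2*x1)));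
      [exact HiS|solve_poly].
  - intros; unfold cofactor, D, S; simpl. unfold S in HS. field. lra.
Qed.

(** * Strict positivity by division modulo the sphere *)

Definition norm2 : fn3 := fun x0 x1 x2 => x0 ^ 2 + x1 ^ 2 + x2 ^ 2.

(** The ratio U of the geometric series inverting W on the sphere. *)
Definition remainder (N : R) (W : fn3) : fn3 :=
  fun x0 x1 x2 => (N * norm2 x0 x1 x2 - W x0 x1 x2) / N.

(** On the sphere W = N (1 - U) for U = remainder N W, so 1/W is approximated
    by the truncated geometric series (1 + U + ... + U^(n-1)) / N. *)
Lemma geometric_inverse (W : fn3) (N : R) : 0 < N -> is_sos (remainder N W) ->
  forall n, exists f q, is_sos f /\ is_poly q /\ forall x0 x1 x2,
    W x0 x1 x2 * f x0 x1 x2 = 1 - remainder N W x0 x1 x2 ^ n + q x0 x1 x2 * sphere x0 x1 x2.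
Proof.
  intros HN SU n. set (U := remainder N W) in *. pose proof (sos_poly _ SU) as PU.
  induction n as [|n IH].
  - exists (fun _ _ _ => 0), (fun _ _ _ => 0).
    repeat split; auto using sos_zero, poly_const. intros; simpl; ring.
  - destruct IH as [f [q [Hf [Hq E]]]].
    exists (fun x0 x1 x2 => / N + U x0 x1 x2 * f x0 x1 x2),
           (fun x0 x1 x2 => 1 + U x0 x1 x2 * q x0 x1 x2).
    repeat split.
    + apply sos_add; [apply sos_const, Rlt_le, Rinv_0_lt_compat; auto | apply sos_mul; auto].
    + solve_poly.
    + intros. transitivity (W x0 x1 x2 / N + U x0 x1 x2 * (W x0 x1 x2 * f x0 x1 x2));
        [unfold Rdiv; ring|].
      rewrite E. unfold U, remainder, norm2, sphere. simpl. field. lra.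
Qed.

Lemma sos_mod_pow_le (U : fn3) (rho : R) : 0 <= rho -> is_sos U ->
  sos_mod (fun x0 x1 x2 => rho - U x0 x1 x2) ->
  forall n, sos_mod (fun x0 x1 x2 => rho ^ n - U x0 x1 x2 ^ n).
Proof.
  intros Hr SU Hd n. induction n as [|n IH].
  - eapply sos_mod_ext; [apply (sos_mod_const 0); lra | intros; simpl; ring].
  - eapply sos_mod_ext.
    + apply sos_mod_add.
      * apply (sos_mod_mul (fun _ _ _ => rho) _ (sos_mod_const rho Hr) IH).
      * apply (sos_mod_mul (fun x0 x1 x2 => U x0 x1 x2 ^ n) _
                 (sos_mod_of_sos _ (sos_pow U n SU)) Hd).
    + intros; simpl; ring.
Qed.

(** If m |X|^2 <= W <= N |X|^2 as sums of squares, then 0 <= U <= 1 - m/N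
    modulo the sphere, so every multiple c U^n eventually drops below any
    eps > 0 modulo the sphere. *)
Lemma remainder_small (W : fn3) (m N c eps : R) : 0 < m <= N -> 0 <= c -> 0 < eps ->
  is_sos (fun x0 x1 x2 => N * norm2 x0 x1 x2 - W x0 x1 x2) ->
  is_sos (fun x0 x1 x2 => W x0 x1 x2 - m * norm2 x0 x1 x2) ->
  is_sos (remainder N W) /\
  exists n, sos_mod (fun x0 x1 x2 => eps - c * remainder N W x0 x1 x2 ^ n).
Proof.
  intros Hm Hc Heps Hup Hlow.
  assert (HiN : 0 <= / N) by (apply Rlt_le, Rinv_0_lt_compat; lra).
  assert (SU : is_sos (remainder N W)).
  { eapply sos_ext; [apply (sos_scal (/ N)); [exact HiN | exact Hup]|].
    intros; unfold remainder; field; lra. }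
  split; [exact SU|].
  set (rho := 1 - m / N).
  assert (Hrho : 0 <= rho < 1).
  { unfold rho. assert (0 < m / N <= 1); [|lra].
    split; [apply Rdiv_lt_0_compat; lra|]. apply Rmult_le_reg_r with N; [lra|].
    unfold Rdiv; rewrite Rmult_assoc, Rinv_l; lra. }
  assert (HUrho : sos_mod (fun x0 x1 x2 => rho - remainder N W x0 x1 x2)).
  { exists (fun x0 x1 x2 => / N * (W x0 x1 x2 - m * norm2 x0 x1 x2)), (fun _ _ _ => - rho).
    repeat split; [apply sos_scal; [exact HiN | exact Hlow] | apply poly_const |].
    intros; unfold remainder, rho, norm2, sphere. field. lra. }
  destruct (pow_lt_1_zero rho) with (y := eps / (c + 1)) as [n Hn];
    [rewrite Rabs_right; lra | apply Rdiv_lt_0_compat; lra |].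
  specialize (Hn n (le_n n)). rewrite Rabs_right in Hn by (apply Rle_ge, pow_le; lra).
  assert (Hsmall : c * rho ^ n <= eps).
  { apply Rmult_lt_compat_l with (r := c + 1) in Hn; [|lra].
    replace ((c + 1) * (eps / (c + 1))) with eps in Hn by (field; lra).
    pose proof (pow_le rho n (proj1 Hrho)). nra. }
  exists n. eapply sos_mod_ext.
  - apply sos_mod_add; [apply (sos_mod_const (eps - c * rho ^ n)); lra|].
    apply (sos_mod_mul (fun _ _ _ => c) _ (sos_mod_const c Hc)
             (sos_mod_pow_le _ rho (proj1 Hrho) SU HUrho n)).
  - intros; simpl; ring.
Qed.

(** Let W be positive definite (m |X|^2 <= W <= N |X|^2
    as sums of squares) and T W, E, T + c E in the quadratic module.  Then
    T + eps E is in the quadratic module for every eps > 0: modulo the sphere,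
    T + eps E = T W f + (T + c E) U^n + E (eps - c U^n), where f is the
    geometric-series inverse of W and U^n is small. *)
Lemma qmod_perturb (T E W : fn3) (m N c eps : R) : 0 < m <= N -> 0 <= c -> 0 < eps ->
  is_sos (fun x0 x1 x2 => N * norm2 x0 x1 x2 - W x0 x1 x2) ->
  is_sos (fun x0 x1 x2 => W x0 x1 x2 - m * norm2 x0 x1 x2) ->
  qmod (fun x0 x1 x2 => T x0 x1 x2 * W x0 x1 x2) -> qmod E ->
  qmod (fun x0 x1 x2 => T x0 x1 x2 + c * E x0 x1 x2) ->
  qmod (fun x0 x1 x2 => T x0 x1 x2 + eps * E x0 x1 x2).
Proof.
  intros Hm Hc Heps Hup Hlow HTW HE HTE.
  assert (PT : is_poly T).
  { pose proof (qmod_poly _ HTE). pose proof (qmod_poly _ HE).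
    eapply poly_ext with (fun x0 x1 x2 => (T x0 x1 x2 + c * E x0 x1 x2) - c * E x0 x1 x2);
      [solve_poly | intros; ring]. }
  destruct (remainder_small W m N c eps Hm Hc Heps Hup Hlow) as [SU [n Herr]].
  destruct (geometric_inverse W N) with (n := n) as [f [q [Sf [Pq Eq]]]];
    [lra | exact SU |].
  set (U := remainder N W) in *.
  apply qmod_mod_sphere with
    (fun x0 x1 x2 => T x0 x1 x2 * W x0 x1 x2 * f x0 x1 x2
       + (T x0 x1 x2 + c * E x0 x1 x2) * U x0 x1 x2 ^ n
       + E x0 x1 x2 * (eps - c * U x0 x1 x2 ^ n))
    (fun x0 x1 x2 => - (T x0 x1 x2 * q x0 x1 x2)).
  - apply qmod_add; [apply qmod_add|].
    + apply (qmod_mul _ f HTW (sos_mod_of_sos _ Sf)).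
    + apply (qmod_mul _ (fun x0 x1 x2 => U x0 x1 x2 ^ n) HTE (sos_mod_of_sos _ (sos_pow U n SU))).
    + apply (qmod_mul _ _ HE Herr).
  - solve_poly.
  - intros. transitivity (T x0 x1 x2 * (W x0 x1 x2 * f x0 x1 x2) + T x0 x1 x2 * U x0 x1 x2 ^ n
       + eps * E x0 x1 x2 - T x0 x1 x2 * q x0 x1 x2 * sphere x0 x1 x2);
      [rewrite Eq; ring | ring].
Qed.

(** * Separating the points outside S *)

(** A tangent form al X0 + 2 be X1 - 3 X2 (al be^2 = 1), tilted by a factor
    1 + de on X1 and perturbed by eps (2 X0 + 2 X1 - X2), is in the quadratic
    module: the tilted form dominates the two tangents with parameters (al, be)
    and (al / (1+de)^2, be (1+de)), whose cofactors sum to a positive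
    definite form, so [qmod_perturb] applies. *)
Lemma tilted_tangent_qmod al be de eps : 0 < al -> 0 < be -> al * be ^ 2 = 1 ->
  0 < de -> 0 < eps ->
  qmod (fun x0 x1 x2 => (al * x0 + 2 * be * (1 + de) * x1 - 3 * x2)
                        + eps * (2 * x0 + 2 * x1 - x2)).
Proof.
  intros Hal Hbe Hab Hde Heps.
  set (al' := al / (1 + de) ^ 2). set (be' := be * (1 + de)).
  assert (Hpow : 0 < (1 + de) ^ 2) by (apply pow_lt; lra).
  assert (Hal' : 0 < al') by (apply Rdiv_lt_0_compat; lra).
  assert (Hab' : al' * be' ^ 2 = 1) by (unfold al', be'; rewrite <- Hab; field; lra).
  assert (Hal'le : al' <= al).
  { apply Rmult_le_reg_r with ((1 + de) ^ 2); [exact Hpow|].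
    unfold al'. replace (al / (1 + de) ^ 2 * (1 + de) ^ 2) with al by (field; lra). nra. }
  set (T := fun x0 x1 x2 => al * x0 + 2 * be * (1 + de) * x1 - 3 * x2).
  set (W := fun x0 x1 x2 => cofactor al (2 * be) x0 x1 x2 + cofactor al' (2 * be') x0 x1 x2).
  assert (Hindep : al * (2 * be') - al' * (2 * be) <> 0).
  { replace (al * (2 * be') - al' * (2 * be))
      with (2 * al * be * ((1 + de) ^ 3 - 1) / (1 + de) ^ 2) by (unfold al', be'; field; lra).
    apply Rgt_not_eq, Rdiv_lt_0_compat; [|exact Hpow].
    assert (1 < (1 + de) ^ 3) by (replace ((1 + de) ^ 3) with (1 + de * (3 + 3 * de + de ^ 2))
                                    by ring; nra).
    nra. }
  destruct (cofactor_pair_lower al (2 * be) al' (2 * be') Hindep) as [m [Hm Hlow]].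
  pose proof (cofactor_pair_upper al (2 * be) al' (2 * be')) as Hup.
  set (N := 21 + 5/2 * (al ^ 2 + (2 * be) ^ 2 + al' ^ 2 + (2 * be') ^ 2)) in Hup.
  assert (HN : 21 <= N).
  { unfold N. pose proof (pow2_ge_0 al); pose proof (pow2_ge_0 (2 * be));
    pose proof (pow2_ge_0 al'); pose proof (pow2_ge_0 (2 * be')). lra. }
  assert (HTW : qmod (fun x0 x1 x2 => T x0 x1 x2 * W x0 x1 x2)).
  { eapply qmod_ext; [apply qmod_add|].
    - apply (tangent_times_cofactor al be al (2 * be * (1 + de))); auto; nra.
    - apply (tangent_times_cofactor al' be' al (2 * be * (1 + de))); auto; unfold be'; nra.
    - intros; unfold T, W; ring. }
  assert (HE : qmod (fun x0 x1 x2 => 2 * x0 + 2 * x1 - x2)) by (apply linear_qmod; lra).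
  assert (HTE : qmod (fun x0 x1 x2 => T x0 x1 x2 + 3 * (2 * x0 + 2 * x1 - x2))).
  { eapply qmod_ext.
    - apply (qmod_scal 6); [lra|].
      apply (linear_qmod ((al + 6) / 6) ((2 * be * (1 + de) + 6) / 6)); nra.
    - intros; unfold T; field. }
  apply (qmod_perturb T (fun x0 x1 x2 => 2 * x0 + 2 * x1 - x2) W m N 3 eps);
    [lra | lra | lra | | exact Hlow | exact HTW | exact HE | exact HTE].
  eapply sos_ext; [exact Hup | intros; unfold W, norm2; ring].
Qed.

Lemma negative_tangent x1 x2 : 0 <= x1 -> x1 ^ 2 < x2 ^ 3 ->
  exists al be, 0 < al /\ 0 < be /\ al * be ^ 2 = 1 /\ al + 2 * be * x1 < 3 * x2.
Proof.
  intros H1 H2.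
  assert (Hx2 : 0 < x2).
  { destruct (Rlt_or_le 0 x2) as [|Hle]; auto.
    pose proof (pow2_ge_0 x1). pose proof (pow2_ge_0 x2).
    replace (x2 ^ 3) with (x2 * x2 ^ 2) in H2 by ring. nra. }
  set (r := sqrt x2).
  assert (Hr : 0 < r) by (apply sqrt_lt_R0; auto).
  assert (Hrr : r * r = x2) by (apply sqrt_sqrt; lra).
  exists x2, (/ r). repeat split; [lra | apply Rinv_0_lt_compat; auto | |].
  - rewrite <- Hrr. field. lra.
  - assert (Hlt : x1 < x2 * r).
    { destruct (Rlt_or_le x1 (x2 * r)) as [|Hle]; auto.
      assert (Hsq : (x2 * r) ^ 2 <= x1 ^ 2) by (apply pow_incr; split; [nra | auto]).
      replace ((x2 * r) ^ 2) with (x2 * x2 * (r * r)) in Hsq by ring.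
      rewrite Hrr in Hsq. lra. }
    apply Rmult_lt_reg_r with r; [exact Hr|].
    replace ((x2 + 2 * / r * x1) * r) with (x2 * r + 2 * x1) by (field; lra). nra.
Qed.

Lemma separation x1 x2 : 0 <= x1 -> x1 ^ 2 < x2 ^ 3 -> exists a0 a1 a2,
  qmod (fun X0 X1 X2 => a0 * X0 + a1 * X1 + a2 * X2) /\ a0 + a1 * x1 + a2 * x2 < 0.
Proof.
  intros H1 H2. destruct (negative_tangent x1 x2 H1 H2) as [al [be [Hal [Hbe [Hab Hneg]]]]].
  set (G := 3 * x2 - al - 2 * be * x1).
  assert (HG : 0 < G) by (unfold G; lra).
  assert (Hx2 : 0 < x2) by nra.
  set (de := G / (4 * (be * x1 + 1))). set (eps := G / (4 * (2 + 2 * x1 + x2))).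
  assert (Hde : 0 < de) by (apply Rdiv_lt_0_compat; nra).
  assert (Heps : 0 < eps) by (apply Rdiv_lt_0_compat; lra).
  exists (al + 2 * eps), (2 * be * (1 + de) + 2 * eps), (- 3 - eps). split.
  - eapply qmod_ext; [apply (tilted_tangent_qmod al be de eps); auto | intros; cbv beta; ring].
  - assert (Htilt : 2 * be * de * x1 <= G / 2).
    { unfold de. replace (2 * be * (G / (4 * (be * x1 + 1))) * x1)
        with (G / 2 * (be * x1 / (be * x1 + 1))) by (field; nra).
      assert (be * x1 / (be * x1 + 1) <= 1); [|nra].
      apply Rmult_le_reg_r with (be * x1 + 1); [nra|].
      replace (be * x1 / (be * x1 + 1) * (be * x1 + 1)) with (be * x1) by (field; nra). lra. }
    assert (Hpert : eps * (2 + 2 * x1 + x2) = G / 4) by (unfold eps; field; lra).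
    replace (al + 2 * eps + (2 * be * (1 + de) + 2 * eps) * x1 + (-3 - eps) * x2)
      with (- G + 2 * be * de * x1 + eps * (2 + 2 * x1 - x2)) by (unfold G; ring).
    nra.
Qed.

(** * Linear inequalities pass to closures and convex hulls *)

Lemma mul_dev a x eps : Rabs x < eps -> a * x <= Rabs a * eps.
Proof.
  intros Hx. eapply Rle_trans; [apply Rle_abs|]. rewrite Rabs_mult.
  apply Rmult_le_compat_l; [apply Rabs_pos | lra].
Qed.

Definition lin3 (a0 a1 a2 : R) (p : R * R * R) : R :=
  a0 * crd0 p + a1 * crd1 p + a2 * crd2 p.

Lemma lin3_closure (A : R * R * R -> Prop) a0 a1 a2 p :
  (forall q, A q -> 0 <= lin3 a0 a1 a2 q) -> closure3 A p -> 0 <= lin3 a0 a1 a2 p.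
Proof.
  intros HA. destruct p as [[p0 p1] p2]. unfold closure3, lin3; simpl. intros Hcl.
  destruct (Rle_or_lt 0 (a0 * p0 + a1 * p1 + a2 * p2)) as [|Hneg]; auto. exfalso.
  set (K := Rabs a0 + Rabs a1 + Rabs a2 + 1).
  assert (HK : 0 < K) by (unfold K; pose proof (Rabs_pos a0); pose proof (Rabs_pos a1);
                         pose proof (Rabs_pos a2); lra).
  set (eps := - (a0 * p0 + a1 * p1 + a2 * p2) / K).
  assert (Heps : 0 < eps) by (apply Rdiv_lt_0_compat; lra).
  destruct (Hcl eps Heps) as [q0 [q1 [q2 [Hq [D0 [D1 D2]]]]]].
  specialize (HA _ Hq). unfold lin3 in HA; simpl in HA.
  pose proof (mul_dev a0 _ _ D0). pose proof (mul_dev a1 _ _ D1). pose proof (mul_dev a2 _ _ D2).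
  assert (Hfit : K * eps = - (a0 * p0 + a1 * p1 + a2 * p2)) by (unfold eps; field; lra).
  unfold K in Hfit. lra.
Qed.

Lemma lin3_conv (A : R * R * R -> Prop) a0 a1 a2 p :
  (forall q, A q -> 0 <= lin3 a0 a1 a2 q) -> conv3 A p -> 0 <= lin3 a0 a1 a2 p.
Proof.
  intros HA [l [HF [_ [E0 [E1 E2]]]]]. unfold lin3. rewrite E0, E1, E2.
  clear E0 E1 E2. induction HF as [|[w q] l [Hw Hq] _ IH]; simpl in *; [lra|].
  specialize (HA q Hq). unfold lin3 in HA.
  assert (0 <= w * (a0 * crd0 q + a1 * crd1 q + a2 * crd2 q)) by (apply Rmult_le_pos; auto).
  nra.
Qed.

Definition aff2 (a0 a1 a2 : R) (x : R * R) : R := a0 * 1 + a1 * fst x + a2 * snd x.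

Lemma aff2_conv (A : R * R -> Prop) a0 a1 a2 x :
  (forall y, A y -> 0 <= aff2 a0 a1 a2 y) -> conv2 A x -> 0 <= aff2 a0 a1 a2 x.
Proof.
  intros HA [l [HF [E [E1 E2]]]]. unfold aff2. rewrite E1, E2, <- E.
  clear E E1 E2. induction HF as [|[w y] l [Hw Hy] _ IH]; simpl in *; [lra|].
  specialize (HA y Hy). unfold aff2 in HA.
  assert (0 <= w * (a0 * 1 + a1 * fst y + a2 * snd y)) by (apply Rmult_le_pos; auto).
  nra.
Qed.

Lemma aff2_closure (A : R * R -> Prop) a0 a1 a2 x :
  (forall y, A y -> 0 <= aff2 a0 a1 a2 y) -> closure2 A x -> 0 <= aff2 a0 a1 a2 x.
Proof.
  intros HA Hcl. unfold aff2.
  destruct (Rle_or_lt 0 (a0 * 1 + a1 * fst x + a2 * snd x)) as [|Hneg]; auto. exfalso.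
  set (K := Rabs a1 + Rabs a2 + 1).
  assert (HK : 0 < K) by (unfold K; pose proof (Rabs_pos a1); pose proof (Rabs_pos a2); lra).
  set (eps := - (a0 * 1 + a1 * fst x + a2 * snd x) / K).
  assert (Heps : 0 < eps) by (apply Rdiv_lt_0_compat; lra).
  destruct (Hcl eps Heps) as [y [Hy [D1 D2]]].
  specialize (HA _ Hy). unfold aff2 in HA.
  pose proof (mul_dev a1 _ _ D1). pose proof (mul_dev a2 _ _ D2).
  assert (Hfit : K * eps = - (a0 * 1 + a1 * fst x + a2 * snd x)) by (unfold eps; field; lra).
  unfold K in Hfit. lra.
Qed.

(** * The closed cone S~^c *)

Lemma amgm3 u v : 0 <= u -> 0 <= v -> 27 * u * v ^ 2 <= (u + 2 * v) ^ 3.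
Proof.
  intros Hu Hv. assert (0 <= (u - v) ^ 2 * (u + 8 * v)) by (apply Rmult_le_pos; [apply pow2_ge_0 | lra]).
  replace ((u + 2 * v) ^ 3) with (27 * u * v ^ 2 + (u - v) ^ 2 * (u + 8 * v)) by ring. lra.
Qed.

Lemma cube_le x y : 0 <= y -> x ^ 3 <= y ^ 3 -> x <= y.
Proof.
  intros Hy H. destruct (Rle_or_lt x y) as [|Hlt]; auto. exfalso.
  assert (0 < (x - y) * (x ^ 2 + x * y + y ^ 2)) by (apply Rmult_lt_0_compat; nra).
  replace ((x - y) * (x ^ 2 + x * y + y ^ 2)) with (x ^ 3 - y ^ 3) in H0 by ring. lra.
Qed.

(** The tangent planes of the cone: by AM-GM, x0 x1^2 >= x2^3 (x0, x1 >= 0)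
    iff x0 + 2 s^3 x1 >= 3 s^2 x2 for every s > 0 (s = x2 / x1 is the
    tangency parameter).  Hence S~^c is an intersection of closed half-spaces. *)
Lemma St_c_halfspaces p : St_c p <->
  0 <= crd0 p /\ 0 <= crd1 p /\ forall s, 0 < s -> 0 <= lin3 1 (2 * s ^ 3) (- 3 * s ^ 2) p.
Proof.
  destruct p as [[x0 x1] x2]. unfold St_c, lin3, crd0, crd1, crd2; cbv beta iota. split.
  - intros [H1 [Hg H0]]. repeat split; auto. intros s Hs.
    assert (Hs6 : 0 < s ^ 6) by (apply pow_lt; lra).
    assert (3 * s ^ 2 * x2 <= x0 + 2 * s ^ 3 * x1); [|lra].
    apply cube_le; [pose proof (pow_lt s 3 Hs); nra|].
    pose proof (amgm3 x0 (s ^ 3 * x1) H0 ltac:(pose proof (pow_lt s 3 Hs); nra)).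
    replace ((3 * s ^ 2 * x2) ^ 3) with (27 * s ^ 6 * x2 ^ 3) by ring.
    replace (27 * x0 * (s ^ 3 * x1) ^ 2) with (27 * s ^ 6 * (x0 * x1 ^ 2)) in H by ring.
    nra.
  - intros [H0 [H1 Ht]]. repeat split; auto.
    destruct (Rle_or_lt x2 0) as [Hx2|Hx2].
    { pose proof (pow2_ge_0 x2). assert (0 <= x0 * x1 ^ 2) by (apply Rmult_le_pos; nra).
      replace (x2 ^ 3) with (x2 * x2 ^ 2) by ring. nra. }
    destruct (Rle_lt_or_eq_dec 0 x1 H1) as [Hx1|Hx1].
    + specialize (Ht (x2 / x1) (Rdiv_lt_0_compat _ _ Hx2 Hx1)).
      replace (1 * x0 + 2 * (x2 / x1) ^ 3 * x1 + -3 * (x2 / x1) ^ 2 * x2)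
        with ((x0 * x1 ^ 2 - x2 ^ 3) / x1 ^ 2) in Ht by (field; lra).
      assert (Hx1' : 0 < x1 ^ 2) by (apply pow_lt; lra).
      apply Rmult_le_compat_r with (r := x1 ^ 2) in Ht; [|lra].
      replace ((x0 * x1 ^ 2 - x2 ^ 3) / x1 ^ 2 * x1 ^ 2) with (x0 * x1 ^ 2 - x2 ^ 3)
        in Ht by (field; lra). lra.
    + exfalso. subst x1. set (s := x0 / x2 + 1).
      assert (Hs : 1 <= s) by (unfold s; assert (0 <= x0 / x2) by (apply Rle_mult_inv_pos; lra); lra).
      specialize (Ht s ltac:(lra)).
      assert (Hsx : s * x2 = x0 + x2) by (unfold s; field; lra).
      nra.
Qed.

Lemma St_c_of_lin p :
  (forall a0 a1 a2, (forall q, St_c q -> 0 <= lin3 a0 a1 a2 q) -> 0 <= lin3 a0 a1 a2 p) ->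
  St_c p.
Proof.
  intros Hp. apply St_c_halfspaces.
  assert (H0 : 0 <= lin3 1 0 0 p).
  { apply Hp. intros q Hq. apply St_c_halfspaces in Hq. unfold lin3. lra. }
  assert (H1 : 0 <= lin3 0 1 0 p).
  { apply Hp. intros q Hq. apply St_c_halfspaces in Hq. unfold lin3. lra. }
  unfold lin3 in H0, H1. repeat split; [lra | lra |].
  intros s Hs. apply Hp. intros q Hq. apply St_c_halfspaces in Hq. apply Hq, Hs.
Qed.

Lemma St_c_closure (A : R * R * R -> Prop) p :
  (forall q, A q -> St_c q) -> closure3 A p -> St_c p.
Proof.
  intros HA Hcl. apply St_c_of_lin. intros a0 a1 a2 Hlin.
  apply (lin3_closure A); [intros q Hq; apply Hlin, HA, Hq | exact Hcl].
Qed.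

Lemma St_c_conv (A : R * R * R -> Prop) p :
  (forall q, A q -> St_c q) -> conv3 A p -> St_c p.
Proof.
  intros HA Hcv. apply St_c_of_lin. intros a0 a1 a2 Hlin.
  apply (lin3_conv A); [intros q Hq; apply Hlin, HA, Hq | exact Hcv].
Qed.

(** S~^c is the closure of S~^o: push x0 up by eps / 2. *)
Lemma closure_St_o p : closure3 St_o p <-> St_c p.
Proof.
  split.
  - apply St_c_closure. intros [[q0 q1] q2]; simpl; lra.
  - destruct p as [[p0 p1] p2]. simpl. intros [A [B C]] eps He.
    exists (p0 + eps / 2), p1, p2. split; [split; [auto | split] |].
    + assert (0 <= eps / 2 * p1 ^ 2) by (apply Rmult_le_pos; [lra | apply pow2_ge_0]). nra.
    + lra.
    + replace (p0 + eps / 2 - p0) with (eps / 2) by ring.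
      replace (p1 - p1) with 0 by ring. replace (p2 - p2) with 0 by ring.
      rewrite Rabs_R0, Rabs_right by lra. lra.
Qed.

(** The form 2 X0 + 2 X1 - 3 X2 = X0 + (X0 + 2 X1 - 3 X2) is positive on
    S~^c minus the origin (tangent plane s = 1 plus X0). *)
Lemma form_pos_St_c p : St_c p -> p <> (0, 0, 0) -> 0 < 2 * crd0 p + 2 * crd1 p - 3 * crd2 p.
Proof.
  intros Hp Hnz. pose proof Hp as Hh. apply St_c_halfspaces in Hh.
  destruct Hh as [H0 [H1 Ht]]. specialize (Ht 1 Rlt_0_1). unfold lin3 in Ht.
  destruct p as [[p0 p1] p2]. simpl in *.
  destruct (Rle_or_lt (2 * p0 + 2 * p1 - 3 * p2) 0) as [Hle|]; auto. exfalso. apply Hnz.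
  assert (p0 = 0) by lra. subst p0. destruct Hp as [_ [Hg _]].
  assert (p2 <= 0).
  { destruct (Rle_or_lt p2 0); auto. assert (0 < p2 ^ 3) by (apply pow_lt; lra). lra. }
  assert (p1 = 0) by lra. assert (p2 = 0) by lra. subst; reflexivity.
Qed.

Lemma St_c_pointed p : St_c p -> St_c (- crd0 p, - crd1 p, - crd2 p) -> p = (0, 0, 0).
Proof.
  destruct p as [[p0 p1] p2]. simpl. intros [A [B C]] [D [E F]].
  assert (p0 = 0) by lra. assert (p1 = 0) by lra. subst.
  assert (p2 ^ 3 = 0) by lra.
  destruct (Req_dec p2 0) as [->|Hnz]; [reflexivity|].
  exfalso. apply (pow_nonzero p2 3 Hnz); assumption.
Qed.

(** * The closed convex hull of S as the limit of the theta bodies *)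

(** A linear form of Q_k(Gt) is nonnegative on S: the point (1, y1, y2) of the
    cone, rescaled onto the unit sphere, satisfies all the constraints Gt. *)
Lemma in_Q_nonneg_S k a0 a1 a2 y :
  in_Q k Gt (fun X0 X1 X2 => a0 * X0 + a1 * X1 + a2 * X2) -> S_set y -> 0 <= aff2 a0 a1 a2 y.
Proof.
  destruct y as [y1 y2]. intros HQ [A B]. unfold aff2; simpl.
  set (r := sqrt (1 + y1 ^ 2 + y2 ^ 2)).
  assert (Hpos : 0 < 1 + y1 ^ 2 + y2 ^ 2) by (pose proof (pow2_ge_0 y1); pose proof (pow2_ge_0 y2); lra).
  assert (Hr : 0 < r) by (apply sqrt_lt_R0; auto).
  assert (Hrr : r * r = 1 + y1 ^ 2 + y2 ^ 2) by (apply sqrt_sqrt; lra).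
  assert (Hval : 0 <= a0 * / r + a1 * (y1 / r) + a2 * (y2 / r)).
  { apply (in_Q_nonneg k _ (/ r) (y1 / r) (y2 / r) HQ).
    - apply Rle_mult_inv_pos; auto.
    - replace (/ r * (y1 / r) ^ 2 - (y2 / r) ^ 3) with ((y1 ^ 2 - y2 ^ 3) * / r ^ 3)
        by (field; lra).
      apply Rle_mult_inv_pos; [auto | apply pow_lt; auto].
    - apply Rlt_le, Rinv_0_lt_compat; auto.
    - replace ((/ r) ^ 2 + (y1 / r) ^ 2 + (y2 / r) ^ 2) with ((1 + y1 ^ 2 + y2 ^ 2) / (r * r))
        by (field; lra).
      rewrite Hrr. field. lra. }
  replace (a0 * / r + a1 * (y1 / r) + a2 * (y2 / r)) with ((a0 * 1 + a1 * y1 + a2 * y2) * / r)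
    in Hval by (field; lra).
  apply Rmult_le_compat_r with (r := r) in Hval; [|lra].
  rewrite Rmult_0_l, Rmult_assoc, Rinv_l, Rmult_1_r in Hval by lra. exact Hval.
Qed.

Lemma closure_conv_S_in_THk x k : closure2 (conv2 S_set) x -> THk k Gt x.
Proof.
  intros Hcl a0 a1 a2 HQ. apply (aff2_closure (conv2 S_set) a0 a1 a2 x); [|exact Hcl].
  intros y Hy. apply (aff2_conv S_set); [|exact Hy].
  intros z Hz. apply (in_Q_nonneg_S k); assumption.
Qed.

Lemma qmod_X1 : qmod (fun X0 X1 X2 => 0 * X0 + 1 * X1 + 0 * X2).
Proof.
  exists (fun _ _ _ => 0), (fun _ _ _ => 1), (fun _ _ _ => 0), (fun _ _ _ => 0), (fun _ _ _ => 0).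
  repeat split; auto using sos_zero, poly_const; [apply sos_const; lra | intros; ring].
Qed.

(** A point in every theta body lies in S: otherwise X1 or a form given by
    [separation] is a linear form of some Q_k(Gt) negative at it. *)
Lemma THk_in_S x : (forall k, (1 <= k)%nat -> THk k Gt x) -> S_set x.
Proof.
  intros H.
  assert (Hc : forall a0 a1 a2, qmod (fun X0 X1 X2 => a0 * X0 + a1 * X1 + a2 * X2) ->
                 0 <= a0 + a1 * fst x + a2 * snd x).
  { intros a0 a1 a2 HM. destruct (qmod_in_Q _ 1 HM) as [k [Hk HQ]].
    pose proof (H k Hk a0 a1 a2 HQ). lra. }
  destruct x as [x1 x2]. simpl in Hc |- *.
  destruct (Rle_or_lt 0 x1) as [H1|H1]; [|pose proof (Hc 0 1 0 qmod_X1); lra].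
  split; auto.
  destruct (Rle_or_lt 0 (x1 ^ 2 - x2 ^ 3)) as [|H2]; auto. exfalso.
  destruct (separation x1 x2 H1 ltac:(lra)) as [a0 [a1 [a2 [HM Hv]]]].
  pose proof (Hc a0 a1 a2 HM). lra.
Qed.

Lemma S_in_closure_conv x : S_set x -> closure2 (conv2 S_set) x.
Proof.
  intros Hx eps He. exists x. split.
  - exists [(1, x)]. repeat split; [repeat constructor; simpl; auto; lra | simpl; ring ..].
  - replace (fst x - fst x) with 0 by ring. replace (snd x - snd x) with 0 by ring.
    rewrite Rabs_R0. lra.
Qed.

Theorem mainTheorem17 :
  (forall p, closure3 St_o p <-> St_c p) /\
  (forall p, conv3 (closure3 St_o) p -> p <> (0, 0, 0) ->
     0 < 2 * crd0 p + 2 * crd1 p - 3 * crd2 p) /\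
  (forall p, closure3 (conv3 (closure3 St_o)) p -> conv3 (closure3 St_o) p) /\
  (forall p, conv3 (closure3 St_o) p ->
     conv3 (closure3 St_o) (- crd0 p, - crd1 p, - crd2 p) -> p = (0, 0, 0)) /\
  (forall x, closure2 (conv2 S_set) x <-> (forall k, (1 <= k)%nat -> THk k Gt x)).
Proof.
  assert (Hconv : forall p, conv3 (closure3 St_o) p <-> St_c p).
  { split.
    - apply St_c_conv. intros q; apply closure_St_o.
    - intros Hp. exists [(1, p)]. repeat split; [repeat constructor; simpl; try lra | ..];
        [apply closure_St_o; exact Hp | destruct p as [[p0 p1] p2]; simpl; ring ..]. }
  split; [exact closure_St_o|]. split.
  { intros p Hp. apply form_pos_St_c, Hconv, Hp. }
  split.
  { intros p Hp. apply Hconv. apply (St_c_closure (conv3 (closure3 St_o))); [|exact Hp].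
    intros q; apply Hconv. }
  split.
  { intros p Hp Hm. apply St_c_pointed; apply Hconv; assumption. }
  intros x; split.
  - intros Hx k _. apply closure_conv_S_in_THk, Hx.
  - intros Hx. apply S_in_closure_conv, THk_in_S, Hx.
Qed.
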